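(* Let $\mathcal{G}(t)$ be a matrix-weighted switching network satisfying Assumption 1 (described in the context), with matrix-valued Laplacian $L^k$ on $[t_k,t_{k+1})$ and $\Delta t_k=t_{k+1}-t_k$. For integers $0\le k'<k''$, let $$\Phi(t_{k''},t_{k'})=e^{-L^{k''-1}\Delta t_{k''-1}}\cdots e^{-L^{k'}\Delta t_{k'}},$$ and let $\widetilde{L}_{[t_{k'},t_{k''})}=\frac{1}{t_{k''}-t_{k'}}\int_{t_{k'}}^{t_{k''}}L(t)dt$. Let $m=\dim\mathrm{null}(\widetilde{L}_{[t_{k'},t_{k''})})$ with $m<dn$, and let $\mu_1\ge\mu_2\ge\cdots\ge\mu_{dn}$ be the eigenvalues of $\Phi(t_{k''},t_{k'})^\top\Phi(t_{k''},t_{k'})$ in nonincreasing order (so that $\mu_1=\dots=\mu_m=1$). Then $$\mu_{m+1}\big(\Phi(t_{k''},t_{k'})^\top\Phi(t_{k''},t_{k'})\big)<1.$$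
   Context: A matrix-weighted switching network $\mathcal{G}(t)=(\mathcal{V},\mathcal{E}(t),A(t))$ has node set $\mathcal{V}=\{1,\dots,n\}$, $n>1$; each edge $(i,j)\in\mathcal{E}(t)$ carries a symmetric weight $A_{ij}(t)\in\mathbb{R}^{d\times d}$ which is either positive (semi-)definite or negative (semi-)definite, with $A_{ij}=A_{ji}$, $A_{ii}=0$, $A_{ij}(t)=0$ if $(i,j)\notin\mathcal{E}(t)$; standing assumption: for each pair $(i,j)$ the weight $A_{ij}(t)$ has the same sign type for all $t$. Set $|A_{ij}|=A_{ij}$ if $A_{ij}\succeq0$ and $-A_{ij}$ if $A_{ij}\preceq0$. With $A=[A_{ij}]\in\mathbb{R}^{dn\times dn}$ and $D=\mathrm{diag}(D_1,\dots,D_n)$, $D_i=\sum_{j:(i,j)\in\mathcal{E}}|A_{ij}|$, the matrix-valued Laplacian is $L=D-A$. Assumption 1: there is a sequence $\{t_k\}_{k\in\mathbb{N}}$ with $t_0=0$, $t_k\to\infty$, $t_{k+1}-t_k\ge\alpha>0$, and $\mathcal{G}(t)$ is constant on each $[t_k,t_{k+1})$. *)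

From HB Require Import structures.
From mathcomp Require Import all_boot all_order all_algebra.
From mathcomp Require Import all_classical all_reals all_analysis.
Set Implicit Arguments. Unset Strict Implicit. Unset Printing Implicit Defensive.
Import Order.TTheory GRing.Theory Num.Theory.
Local Open Scope ring_scope.

Definition psd (R : realType) (d : nat) (M : 'M[R]_d) : Prop :=
  M^T = M /\ forall x : 'cV[R]_d, 0 <= (x^T *m M *m x) 0 0.
Definition nsd (R : realType) (d : nat) (M : 'M[R]_d) : Prop := psd (- M).

(* |A_ij| : sgn i j = true means A_ij is positive semidefinite,
   false means negative semidefinite *)
Definition mabs (R : realType) (d : nat) (b : bool) (M : 'M[R]_d) : 'M[R]_d :=
  if b then M else - M.

(* A matrix-weighted network on n nodes with d x d weights, given by the
   weight function W : 'I_n -> 'I_n -> 'M_d (W i j = 0 when (i,j) is not an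
   edge) and the sign type sgn. *)
Definition weight_ok (R : realType) (n d : nat) (sgn : 'I_n -> 'I_n -> bool)
  (W : 'I_n -> 'I_n -> 'M[R]_d) : Prop :=
  (forall i j, W i j = W j i) /\ (forall i, W i i = 0) /\
  (forall i j, if sgn i j then psd (W i j) else nsd (W i j)).

(* dimension dn, written as \sum_(i < n) d via block matrices *)
Definition dn (n d : nat) : nat := (\sum_(i < n) d)%N.

Definition adjmx (R : realType) (n d : nat) (W : 'I_n -> 'I_n -> 'M[R]_d)
  : 'M[R]_(dn n d) := \mxblock_(i < n, j < n) W i j.

Definition degmx (R : realType) (n d : nat) (sgn : 'I_n -> 'I_n -> bool)
  (W : 'I_n -> 'I_n -> 'M[R]_d) : 'M[R]_(dn n d) :=
  \mxdiag_(i < n) (\sum_(j < n) mabs (sgn i j) (W i j)).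

Definition laplacian (R : realType) (n d : nat) (sgn : 'I_n -> 'I_n -> bool)
  (W : 'I_n -> 'I_n -> 'M[R]_d) : 'M[R]_(dn n d) :=
  degmx sgn W - adjmx W.

Definition mexp (R : realType) (N : nat) (M : 'M[R]_N) : 'M[R]_N :=
  limn (fun K : nat => \sum_(k < K) (k`!%:R)^-1 *: (M ^+ k)).

Fixpoint transition (R : realType) (N : nat) (L : nat -> 'M[R]_N)
  (dt : nat -> R) (k1 : nat) (len : nat) : 'M[R]_N :=
  match len with
  | 0 => 1%:M
  | len'.+1 => mexp (- (dt (k1 + len')%N *: L (k1 + len')%N))
               *m transition L dt k1 len'
  end.

Definition Phi (R : realType) (N : nat) (L : nat -> 'M[R]_N) (dt : nat -> R)
  (k1 k2 : nat) : 'M[R]_N := transition L dt k1 (k2 - k1).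

(* averaged Laplacian (1/(t_{k2}-t_{k1})) \int_{t_{k1}}^{t_{k2}} L(t) dt,
   for L(t) = L^k on [t_k, t_{k+1}) *)
Definition avg_laplacian (R : realType) (N : nat) (L : nat -> 'M[R]_N)
  (t : nat -> R) (k1 k2 : nat) : 'M[R]_N :=
  (t k2 - t k1)^-1 *: \sum_(k1 <= k < k2) ((t k.+1 - t k) *: L k).

Definition eigs_noninc (R : realType) (N : nat) (M : 'M[R]_N) (mu : seq R)
  : Prop :=
  size mu = N /\ sorted (fun x y => y <= x) mu /\
  char_poly M = \prod_(x <- mu) ('X - x%:P).

From HB Require Import structures.
From mathcomp Require Import all_boot all_order all_algebra.
From mathcomp Require Import all_classical all_reals all_analysis.
From mathcomp Require Import complex lra.
Import Order.TTheory GRing.Theory Num.Theory numFieldNormedType.Exports.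
Set Implicit Arguments. Unset Strict Implicit. Unset Printing Implicit Defensive.
Local Open Scope ring_scope.

(* Each Laplacian L^k is symmetric positive semidefinite, so diagonalising it
   shows that E_k = exp(-dt_k L^k) is a symmetric contraction that fixes
   exactly ker L^k and strictly shrinks every vector outside it.  Hence
   |x Phi^T| = |x| only when x lies in every ker L^k, i.e. in the kernel of the
   averaged Laplacian.  So the eigenvalues of the symmetric matrix Phi^T Phi are
   at most 1 and its eigenspace for 1 has dimension m; since algebraic and
   geometric multiplicities agree for symmetric matrices, 1 is a root of
   multiplicity exactly m of the characteristic polynomial, and mu_(m+1) < 1. *)

Definition bform (R : pzRingType) m n (M : 'M[R]_(m, n))
  (u : 'rV[R]_m) (v : 'rV[R]_n) : R := (u *m M *m v^T) 0 0.

Definition sqnorm (R : pzRingType) n (u : 'rV[R]_n) : R := (u *m u^T) 0 0.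

Section QuadraticForms.
Variables (R : realFieldType) (N : nat).
Implicit Types (u v w : 'rV[R]_N) (M : 'M[R]_N).

Lemma bformDl M u v w : bform M (u + v) w = bform M u w + bform M v w.
Proof. by rewrite /bform !mulmxDl mxE. Qed.

Lemma bformDr M u v w : bform M w (u + v) = bform M w u + bform M w v.
Proof. by rewrite /bform linearD mulmxDr mxE. Qed.

Lemma bformNl M u v : bform M (- u) v = - bform M u v.
Proof. by rewrite /bform !mulNmx mxE. Qed.

Lemma bformNr M u v : bform M u (- v) = - bform M u v.
Proof. by rewrite /bform linearN mulmxN mxE. Qed.

Lemma bformNM M u v : bform (- M) u v = - bform M u v.
Proof. by rewrite /bform mulmxN mulNmx mxE. Qed.

Lemma bformBM M M' u v : bform (M - M') u v = bform M u v - bform M' u v.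
Proof. by rewrite /bform mulmxBr mulmxBl !mxE. Qed.

Lemma bformZM a M u v : bform (a *: M) u v = a * bform M u v.
Proof. by rewrite /bform -scalemxAr -scalemxAl mxE. Qed.

Lemma bform_sumM (I : Type) (r : seq I) (F : I -> 'M[R]_N) u v :
  bform (\sum_(i <- r) F i) u v = \sum_(i <- r) bform (F i) u v.
Proof.
elim: r => [|i r IHr]; first by rewrite !big_nil /bform mulmx0 mul0mx mxE.
by rewrite !big_cons /bform mulmxDr mulmxDl mxE -IHr.
Qed.

Lemma sqnormE u : sqnorm u = \sum_j u 0 j ^+ 2.
Proof. by rewrite /sqnorm mxE; apply: eq_bigr => j _; rewrite mxE expr2. Qed.

Lemma sqnorm_ge0 u : 0 <= sqnorm u.
Proof. by rewrite sqnormE sumr_ge0 // => j _; apply: sqr_ge0. Qed.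

Lemma sqnorm_eq0 u : (sqnorm u == 0) = (u == 0).
Proof.
apply/idP/eqP => [|->]; last by rewrite /sqnorm mul0mx mxE.
rewrite sqnormE => /eqP /psumr_eq0P u0; apply/rowP => j; apply/eqP.
by rewrite mxE -sqrf_eq0 u0 // => i _; apply: sqr_ge0.
Qed.

Lemma sqnorm_gt0 u : (0 < sqnorm u) = (u != 0).
Proof. by rewrite lt_def sqnorm_eq0 sqnorm_ge0 andbT. Qed.

Lemma sqnorm_mul u M : sqnorm (u *m M) = bform (M *m M^T) u u.
Proof. by rewrite /sqnorm /bform trmx_mul !mulmxA. Qed.

Lemma sqnormD_sym u (E H : 'M[R]_N) : E^T = E -> H^T = H ->
  E *m E + H *m H = 1%:M -> sqnorm (u *m E) + sqnorm (u *m H) = sqnorm u.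
Proof.
move=> Esym Hsym EH1; rewrite -[u in RHS]mulmx1 !sqnorm_mul Esym Hsym trmx1 mulmx1.
by rewrite -EH1 /bform mulmxDr mulmxDl [RHS]mxE.
Qed.

End QuadraticForms.

Section BlockForms.
Variables (R : realFieldType) (n : nat) (p_ : 'I_n -> nat).
Variables (xs ys : forall i, 'rV[R]_(p_ i)).

Lemma bform_mxdiag (D : forall i, 'M[R]_(p_ i)) :
  bform (\mxdiag_i D i) (\mxrow_i xs i) (\mxrow_i ys i) = \sum_i bform (D i) (xs i) (ys i).
Proof. by rewrite /bform mul_mxrow_mxdiag tr_mxrow mul_mxrow_mxcol summxE. Qed.

Lemma bform_mxblock (B : forall i j, 'M[R]_(p_ i, p_ j)) :
  bform (\mxblock_(i, j) B i j) (\mxrow_i xs i) (\mxrow_i ys i) =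
  \sum_i \sum_j bform (B i j) (xs i) (ys j).
Proof.
rewrite /bform mul_mxrow_mxblock tr_mxrow mul_mxrow_mxcol summxE exchange_big.
by apply: eq_bigr => j _; rewrite mulmx_suml summxE.
Qed.

End BlockForms.

Lemma comm_diag_mx_map (R : idomainType) N (G : 'M[R]_N) (d : 'rV[R]_N) (f : R -> R) :
  G *m diag_mx d = diag_mx d *m G ->
  G *m diag_mx (map_mx f d) = diag_mx (map_mx f d) *m G.
Proof.
move=> /matrixP Gd; apply/matrixP => i j; have := Gd i j.
rewrite !mul_mx_diag !mul_diag_mx !mxE => Gdij.
have [->|Gij_neq0] := eqVneq (G i j) 0; first by rewrite mul0r mulr0.
by rewrite (mulfI Gij_neq0 (etrans Gdij (mulrC _ _))) mulrC.
Qed.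

Section FunctionalCalculus.
Variables (R : fieldType) (N : nat) (P : 'M[R]_N) (d : 'rV[R]_N).
Hypothesis P_unit : P \in unitmx.
Implicit Types (f g : R -> R).

Definition mxfun f : 'M[R]_N := invmx P *m diag_mx (map_mx f d) *m P.

Lemma eq_mxfun f g : (forall j, f (d 0 j) = g (d 0 j)) -> mxfun f = mxfun g.
Proof. by move=> fg; congr (_ *m diag_mx _ *m _); apply/rowP => j; rewrite !mxE. Qed.

Lemma mxfunM f g : mxfun f *m mxfun g = mxfun (fun z => f z * g z).
Proof.
rewrite /mxfun !mulmxA mulmxK // -[in LHS](mulmxA (invmx P)) mulmx_diag.
by congr (_ *m diag_mx _ *m _); apply/rowP => j; rewrite !mxE.
Qed.

Lemma mxfun_cst a : mxfun (fun=> a) = a%:M.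
Proof.
rewrite /mxfun (_ : diag_mx _ = a%:M); last by apply/matrixP => i j; rewrite !mxE.
by rewrite mul_mx_scalar -scalemxAl mulVmx // scalemx1.
Qed.

Lemma mxfunB f g : mxfun f - mxfun g = mxfun (fun z => f z - g z).
Proof.
rewrite /mxfun -mulmxBl -mulmxBr -linearB /=.
by congr (_ *m diag_mx _ *m _); apply/rowP => j; rewrite !mxE.
Qed.

Lemma mxfunD f g : mxfun f + mxfun g = mxfun (fun z => f z + g z).
Proof.
rewrite /mxfun -mulmxDl -mulmxDr -linearD /=.
by congr (_ *m diag_mx _ *m _); apply/rowP => j; rewrite !mxE.
Qed.

Lemma mxfunZ a f : a *: mxfun f = mxfun (fun z => a * f z).
Proof.
rewrite /mxfun scalemxAl scalemxAr -linearZ /=.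
by congr (_ *m diag_mx _ *m _); apply/rowP => j; rewrite !mxE.
Qed.

Lemma mxfunX f k : mxfun f ^+ k = mxfun (fun z => f z ^+ k).
Proof.
elim: k => [|k IHk].
  by rewrite expr0 (@eq_mxfun _ (fun=> 1)) ?mxfun_cst // => j; rewrite expr0.
by rewrite exprS IHk -mulmxE mxfunM; apply: eq_mxfun => j; rewrite exprS.
Qed.

Lemma mxfun_sum_delta f :
  mxfun f = \sum_l f (d 0 l) *: (invmx P *m delta_mx l l *m P).
Proof.
rewrite /mxfun diag_mx_sum_delta mulmx_sumr mulmx_suml.
by apply: eq_bigr => l _; rewrite -scalemxAr -scalemxAl mxE.
Qed.

Lemma mulmx_mxfun_eq0 f g (x : 'rV[R]_N) :
  (forall j, f (d 0 j) = 0 -> g (d 0 j) = 0) ->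
  x *m mxfun f = 0 -> x *m mxfun g = 0.
Proof.
move=> fg xf0; have : x *m mxfun f *m invmx P = 0 by rewrite xf0 mul0mx.
rewrite /mxfun !mulmxA mulmxK // => cf0; apply/eqP; rewrite mulmx_free_eq0 ?row_free_unit //.
apply/eqP/rowP => j; move/rowP/(_ j): cf0; rewrite !mul_mx_diag !mxE.
by move/eqP; rewrite mulf_eq0 => /orP[/eqP->|/eqP/fg->]; rewrite ?mul0r ?mulr0.
Qed.

(* P need not be orthogonal: it is this commutation that makes every
   mxfun f symmetric. *)
Hypothesis PPt_comm : P *m P^T *m diag_mx d = diag_mx d *m (P *m P^T).

Lemma mxfun_tr f : (mxfun f)^T = mxfun f.
Proof.
have Pt_unit : P^T \in unitmx by rewrite unitmx_tr.
apply: (can_inj (mulKmx P_unit)); apply: (can_inj (mulmxK Pt_unit)).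
have PPtK : (invmx P)^T *m P^T = 1%:M by rewrite -trmx_mul mulmxV // trmx1.
rewrite /mxfun !trmx_mul tr_diag_mx !mulmxA mulmxV // mul1mx.
by rewrite -(mulmxA _ (invmx P)^T) PPtK mulmx1 (comm_diag_mx_map f PPt_comm) mulmxA.
Qed.

End FunctionalCalculus.

Lemma mexp_mxfun (R : realType) N (P : 'M[R]_N) (d : 'rV[R]_N) (f : R -> R) :
  P \in unitmx -> mexp (mxfun P d f) = mxfun P d (fun z => expR (f z)).
Proof.
move=> P_unit; apply: cvg_lim; first exact: norm_hausdorff.
pose B l := invmx P *m delta_mx l l *m P.
have -> : (fun K => \sum_(k < K) (k`!%:R)^-1 *: mxfun P d f ^+ k) =
    (fun K => \sum_l series (exp_coeff (f (d 0 l))) K *: B l).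
  apply: funext => K.
  under eq_bigr => k _ do rewrite mxfunX // mxfun_sum_delta scaler_sumr.
  rewrite exchange_big /=; apply: eq_bigr => l _.
  rewrite seriesEord /= scaler_suml; apply: eq_bigr => k _.
  by rewrite scalerA /exp_coeff /= mulrC.
rewrite mxfun_sum_delta; apply: cvg_big => //; first exact: add_continuous.
by move=> l _; apply: cvgZr_tmp; apply: is_cvg_series_exp_coeff.
Qed.

Lemma real_symmetric_diag (R : rcfType) N (A : 'M[R]_N) : A^T = A ->
  exists P : 'M[R]_N, exists d : 'rV[R]_N,
    P \in unitmx /\ P *m A = diag_mx d *m P.
Proof.
move=> Asym; pose f := real_complex R; pose AC := map_mx f A.
have AC_real : AC \is a realmx.
  by apply/mxOverP => i j; rewrite mxE; apply/complex_realP; exists (A i j).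
have AC_sym : AC \is symmetricmx.
  by apply/is_hermitianmxP; rewrite expr0 scale1r map_mx_id // /AC map_trmx Asym.
have AC_herm := realsym_hermsym AC_sym AC_real.
have /orthomx_spectralP AC_spec := hermitian_normalmx AC_herm.
set U := spectralmx AC in AC_spec; set dd := spectral_diag AC in AC_spec.
have dd_real : diag_mx dd \is a realmx.
  move/mxOverP: (hermitian_spectral_diag_real AC_herm) => dd_real.
  apply/mxOverP => i j; rewrite mxE.
  by case: eqP => _; rewrite ?mulr1n ?mulr0n ?dd_real ?real0.
have U_unit : U \in unitmx by apply: spectral_unit.
have : similar_in unitmx AC (diag_mx dd).
  by exists U => //; apply/similarP => //; rewrite AC_spec !mulmxA mulmxV // mul1mx.
move=> /real_similar /(_ AC_real dd_real) [Q /andP [Q_real Q_unit] /(similarP Q_unit) QE].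
pose re := fun z : R[i] => complex.Re z.
have reK (M : 'M[R[i]]_N) : M \is a realmx -> map_mx f (map_mx re M) = M.
  by move=> /mxOverP M_real; apply/matrixP => i j; rewrite !mxE; apply: RRe_real.
exists (map_mx re Q), (\row_j re (dd 0 j)); split; first by rewrite -(map_unitmx f) reK.
have ddE : diag_mx dd = map_mx f (diag_mx (\row_j re (dd 0 j))).
  rewrite map_diag_mx; congr diag_mx; apply/matrixP => i j; rewrite !mxE ord1.
  by apply/esym/RRe_real; move/mxOverP: (hermitian_spectral_diag_real AC_herm); apply.
by apply: (map_mx_inj (f := f)); rewrite !map_mxM reK // -ddE.
Qed.

Lemma psd_form (R : realType) N (M : 'M[R]_N) :
  psd M <-> M^T = M /\ forall u : 'rV[R]_N, 0 <= bform M u u.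
Proof.
split=> -[Msym M_ge0]; split=> // x.
  by have := M_ge0 x^T; rewrite trmxK.
by have := M_ge0 x^T; rewrite /bform trmxK.
Qed.

Lemma psd_spectral (R : realType) N (A : 'M[R]_N) : psd A ->
  exists P, exists d : 'rV[R]_N, [/\ P \in unitmx,
    P *m P^T *m diag_mx d = diag_mx d *m (P *m P^T),
    A = mxfun P d id & forall j, 0 <= d 0 j].
Proof.
move=> /psd_form [Asym A_ge0]; have [P [d [P_unit PA]]] := real_symmetric_diag Asym.
have AE : A = mxfun P d id.
  rewrite /mxfun (_ : map_mx id d = d); last by apply/rowP => j; rewrite mxE.
  by rewrite -mulmxA -PA mulKmx.
exists P, d; split=> // [|j].
  have APt : A *m P^T = P^T *m diag_mx d.
    by rewrite -{1}Asym -trmx_mul PA trmx_mul tr_diag_mx.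
  by rewrite -mulmxA -APt mulmxA PA mulmxA.
have rowPA : row j P *m A = d 0 j *: row j P.
  by rewrite -row_mul PA row_mul row_diag_mx -scalemxAl -rowE.
have rowP_neq0 : row j P != 0.
  rewrite rowE mulmx_free_eq0 ?row_free_unit //.
  by apply/eqP => /matrixP/(_ 0 j); rewrite !mxE !eqxx; apply/eqP; apply: oner_neq0.
have := A_ge0 (row j P); rewrite /bform rowPA -scalemxAl mxE -/(sqnorm _).
by rewrite pmulr_lge0 // sqnorm_gt0.
Qed.

Lemma psd_form_eq0 (R : realType) N (A : 'M[R]_N) (x : 'rV[R]_N) :
  psd A -> bform A x x = 0 -> x *m A = 0.
Proof.
case/psd_spectral => P [d [P_unit PPt A_def d_ge0]] xAx0.
(* With B the square root of A, x A x^T = |x B|^2. *)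
pose B := mxfun P d Num.sqrt.
have BB : B *m B = A.
  by rewrite mxfunM // A_def; apply: eq_mxfun => j; rewrite -expr2 sqr_sqrtr.
have : sqnorm (x *m B) == 0 by rewrite sqnorm_mul mxfun_tr // BB xAx0.
by rewrite sqnorm_eq0 => /eqP xB0; rewrite -BB mulmxA xB0 mul0mx.
Qed.

Definition kernel_contraction (R : realFieldType) N (E A : 'M[R]_N) : Prop :=
  [/\ E^T = E, forall x : 'rV_N, sqnorm (x *m E) <= sqnorm x,
      forall x : 'rV_N, sqnorm x <= sqnorm (x *m E) -> x *m A = 0 &
      forall x : 'rV_N, x *m A = 0 -> x *m E = x].

Lemma psd_mexp_contraction (R : realType) N (A : 'M[R]_N) (tau : R) :
  psd A -> 0 < tau -> kernel_contraction (mexp (- (tau *: A))) A.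
Proof.
case/psd_spectral => P [d [P_unit PPt -> d_ge0]] tau_gt0.
pose e z := expR (- (tau * z)); pose h z := Num.sqrt (1 - e z ^+ 2).
(* E^2 + H^2 = 1, so |x|^2 - |x E|^2 = |x H|^2, and H vanishes only on ker A. *)
have -> : mexp (- (tau *: mxfun P d id)) = mxfun P d e.
  by rewrite -scaleNr mxfunZ // mexp_mxfun //; apply: eq_mxfun => j; rewrite mulNr.
have e_le1 j : e (d 0 j) ^+ 2 <= 1.
  by rewrite expr_le1 ?expR_ge0 // expR_le1 oppr_le0 mulr_ge0 // ltW.
have pythagoras x : sqnorm (x *m mxfun P d e) + sqnorm (x *m mxfun P d h) = sqnorm x.
  apply: sqnormD_sym; rewrite ?mxfun_tr // !mxfunM // mxfunD -(mxfun_cst d P_unit).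
  by apply: eq_mxfun => j; rewrite -!expr2 sqr_sqrtr ?subr_ge0 // addrC subrK.
split=> [|x|x|x xA0]; first exact: mxfun_tr.
- by rewrite -[leRHS](pythagoras x) lerDl sqnorm_ge0.
- rewrite -[leLHS](pythagoras x) gerDl => xh_le0.
  have : sqnorm (x *m mxfun P d h) == 0 by rewrite eq_le xh_le0 sqnorm_ge0.
  rewrite sqnorm_eq0 => /eqP; apply: mulmx_mxfun_eq0 => // j /eqP.
  rewrite sqrtr_eq0 subr_le0 leNgt => /negP e_nlt1.
  apply/le_anti; rewrite d_ge0 andbT leNgt; apply/negP => dj_gt0; apply: e_nlt1.
  by rewrite expr_lt1 ?expR_ge0 // expR_lt1 oppr_lt0 mulr_gt0.
- apply/eqP; rewrite -subr_eq0 -[X in _ - X]mulmx1 -mulmxBr -(mxfun_cst d P_unit) mxfunB //.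
  apply/eqP; apply: mulmx_mxfun_eq0 xA0 => // j /= ->.
  by rewrite /e mulr0 oppr0 expR0 subrr.
Qed.

Lemma psd_nsd_eq0 (R : realType) N (M : 'M[R]_N) : psd M -> nsd M -> M = 0.
Proof.
move=> Mpsd Mnsd; apply/row_matrixP => i; rewrite row0 rowE.
apply: (psd_form_eq0 Mpsd); apply/eqP; rewrite eq_le.
have [_ M_ge0] := (psd_form M).1 Mpsd; have [_ NM_ge0] := (psd_form (- M)).1 Mnsd.
by rewrite M_ge0 andbT -oppr_ge0 -bformNM NM_ge0.
Qed.

Lemma bform_mabs_pair (R : realType) d (s : bool) (M : 'M[R]_d) (u v : 'rV[R]_d) :
  let w := if s then u - v else u + v in
  bform (mabs s M) u u - bform M u v + (bform (mabs s M) v v - bform M v u) =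
  bform (mabs s M) w w.
Proof.
by case: s; rewrite /mabs ?bformNM !(bformDl, bformDr, bformNl, bformNr); lra.
Qed.

Section Laplacian.
Variables (R : realType) (n d : nat) (sgn : 'I_n -> 'I_n -> bool).
Variable W : 'I_n -> 'I_n -> 'M[R]_d.
Hypothesis W_ok : weight_ok sgn W.

Lemma mabs_psd i j : psd (mabs (sgn i j) (W i j)).
Proof. by case: W_ok => _ [_ /(_ i j)]; rewrite /mabs; case: (sgn i j). Qed.

Lemma weight_sym i j : (W i j)^T = W i j.
Proof.
case: W_ok => _ [_ /(_ i j)]; case: (sgn i j) => [[]//|[]].
by rewrite linearN => /eqP; rewrite eqr_opp => /eqP.
Qed.

(* sgn need not be symmetric, but a weight that is both psd and nsd is 0. *)
Lemma mabs_sgnC i j : mabs (sgn j i) (W i j) = mabs (sgn i j) (W i j).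
Proof.
case: W_ok => W_sym [_ W_sgn]; move: (W_sgn i j) (W_sgn j i); rewrite -(W_sym i j).
by case: (sgn i j); case: (sgn j i) => //= *;
  rewrite (@psd_nsd_eq0 _ _ (W i j)) ?oppr0.
Qed.

Lemma laplacian_sym : (laplacian sgn W)^T = laplacian sgn W.
Proof.
rewrite /laplacian /degmx /adjmx linearB /= tr_mxdiag tr_mxblock; congr (_ - _).
  apply/eq_mxdiagP => i; rewrite linear_sum /=; apply: eq_bigr => j _.
  by have [] := mabs_psd i j.
by apply/eq_mxblockP => i j; rewrite weight_sym; case: W_ok.
Qed.

Lemma laplacian_bform (xs : 'I_n -> 'rV[R]_d) :
  bform (laplacian sgn W) (\mxrow_i xs i) (\mxrow_i xs i) =
  \sum_i \sum_j (bform (mabs (sgn i j) (W i j)) (xs i) (xs i)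
                 - bform (W i j) (xs i) (xs j)).
Proof.
rewrite /laplacian bformBM bform_mxdiag bform_mxblock -sumrB.
by apply: eq_bigr => i _; rewrite bform_sumM -sumrB.
Qed.

Lemma laplacian_psd : psd (laplacian sgn W).
Proof.
apply/psd_form; split=> [|x]; first exact: laplacian_sym.
rewrite -[x](submxrowK (q_ := fun=> d)) laplacian_bform.
set xs := submxrow x.
pose a i j := bform (mabs (sgn i j) (W i j)) (xs i) (xs i) - bform (W i j) (xs i) (xs j).
change (0 <= \sum_i \sum_j a i j).
have a_pair_ge0 i j : 0 <= a i j + a j i.
  have [_ W_ge0] := (psd_form _).1 (mabs_psd i j); case: W_ok => W_sym _.
  by rewrite /a -(W_sym i j) mabs_sgnC bform_mabs_pair W_ge0.
have : 0 <= \sum_i \sum_j (a i j + a j i).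
  by apply: sumr_ge0 => i _; apply: sumr_ge0 => j _.
under eq_bigr => i _ do rewrite big_split /=.
by rewrite big_split /= [X in _ + X]exchange_big /= -mulr2n pmulrn_lge0.
Qed.

End Laplacian.

Section Transition.
Variables (R : realType) (N : nat) (L : nat -> 'M[R]_N) (dt : nat -> R).
Hypothesis L_contr : forall k, kernel_contraction (mexp (- (dt k *: L k))) (L k).
Variable k1 : nat.

Lemma transition_fixed len (x : 'rV[R]_N) :
  (forall k, (k1 <= k < k1 + len)%N -> x *m L k = 0) ->
  x *m transition L dt k1 len = x /\ x *m (transition L dt k1 len)^T = x.
Proof.
elim: len => [|len IHlen] xL0 /=; first by rewrite trmx1 mulmx1.
have [T_fix Tt_fix] : x *m transition L dt k1 len = x /\
                      x *m (transition L dt k1 len)^T = x.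
  by apply: IHlen => k /andP[k1k klen]; rewrite xL0 // k1k addnS ltnS ltnW.
have [E_sym _ _ E_fix] := L_contr (k1 + len).
have xL0' : x *m L (k1 + len)%N = 0 by rewrite xL0 // leq_addr addnS ltnSn.
by rewrite trmx_mul !mulmxA E_fix // Tt_fix E_sym E_fix.
Qed.

Lemma transition_contraction len (x : 'rV[R]_N) :
  sqnorm (x *m (transition L dt k1 len)^T) <= sqnorm x /\
  (sqnorm x <= sqnorm (x *m (transition L dt k1 len)^T) ->
    forall k, (k1 <= k < k1 + len)%N -> x *m L k = 0).
Proof.
elim: len => [|len [T_le T_eq]] /=.
  by rewrite trmx1 mulmx1; split=> // _ k; rewrite addn0 => /andP[k1k]; rewrite ltnNge k1k.
have [E_sym E_le E_eq _] := L_contr (k1 + len).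
set E := mexp _ in E_sym E_le E_eq *; set T := transition L dt k1 len in T_le T_eq *.
rewrite trmx_mul E_sym mulmxA; split=> [|x_le]; first exact: le_trans (E_le _) T_le.
have /T_eq xL0 : sqnorm x <= sqnorm (x *m T^T) := le_trans x_le (E_le _).
have [_ Tt_fix] := transition_fixed xL0; rewrite Tt_fix in x_le.
move=> k /andP[k1k]; rewrite addnS ltnS leq_eqVlt => /orP[/eqP->|klen]; first exact: E_eq.
by rewrite xL0 // k1k.
Qed.

Section Gram.
Variable len : nat.
Let T := transition L dt k1 len.

Lemma transition_gram_eigenspace1 (x : 'rV[R]_N) :
  (x <= eigenspace (T^T *m T) 1)%MS <->
  (forall k, (k1 <= k < k1 + len)%N -> x *m L k = 0).
Proof.
split=> [/eigenspaceP|/transition_fixed [T_fix Tt_fix]]; last first.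
  by apply/eigenspaceP; rewrite scale1r mulmxA Tt_fix T_fix.
rewrite scale1r => x_fix; apply: (transition_contraction len x).2.
by rewrite sqnorm_mul trmxK /bform x_fix.
Qed.

Lemma transition_gram_eigenvalue_le1 (a : R) : eigenvalue (T^T *m T) a -> a <= 1.
Proof.
case/eigenvalueP => v vS v_neq0; rewrite -(ler_pM2r (_ : 0 < sqnorm v)) ?sqnorm_gt0 // mul1r.
have := (transition_contraction len v).1; rewrite sqnorm_mul trmxK /bform vS.
by rewrite -scalemxAl mxE.
Qed.

End Gram.
End Transition.

Section Averaging.
Variables (R : realType) (N : nat) (L : nat -> 'M[R]_N) (t : nat -> R).
Hypotheses (L_psd : forall k, psd (L k)) (t_incr : forall k, t k < t k.+1).
Variables (k1 k2 : nat).
Hypothesis k12 : (k1 < k2)%N.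

Lemma avg_laplacian_ker (x : 'rV[R]_N) :
  x *m avg_laplacian L t k1 k2 = 0 <-> (forall k, (k1 <= k < k2)%N -> x *m L k = 0).
Proof.
rewrite /avg_laplacian; split=> [x_avg0 k k_in|xL0].
  have t12_gt0 : 0 < t k2 - t k1 by rewrite subr_gt0 (homo_ltn lt_trans t_incr).
  have dt_gt0 i : 0 < t i.+1 - t i by rewrite subr_gt0.
  have : bform (avg_laplacian L t k1 k2) x x = 0 by rewrite /bform x_avg0 mul0mx mxE.
  rewrite bformZM bform_sumM => /eqP; rewrite mulf_eq0 invr_eq0 gt_eqF //=.
  rewrite psumr_eq0 => [/allP/(_ k)|i _]; last first.
    by have [_ L_ge0] := (psd_form _).1 (L_psd i); rewrite bformZM mulr_ge0 ?L_ge0 // ltW.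
  rewrite mem_index_iota k_in bformZM mulf_eq0 gt_eqF //= => /(_ isT) /eqP.
  exact: psd_form_eq0.
rewrite -scalemxAr mulmx_sumr big_nat_cond big1 ?scaler0 // => k /andP[k_in _].
by rewrite -scalemxAr xL0 ?scaler0.
Qed.

Let T := Phi L (fun k => t k.+1 - t k) k1 k2.

Let L_contr k : kernel_contraction (mexp (- ((t k.+1 - t k) *: L k))) (L k).
Proof. by apply: psd_mexp_contraction; rewrite ?subr_gt0. Qed.

Lemma Phi_gram_eigenvalue_le1 (a : R) : eigenvalue (T^T *m T) a -> a <= 1.
Proof. exact: transition_gram_eigenvalue_le1 L_contr _ _ a. Qed.

Lemma Phi_gram_eigenspace1_rank :
  \rank (eigenspace (T^T *m T) 1) = \rank (kermx (avg_laplacian L t k1 k2)).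
Proof.
have k2E : (k1 + (k2 - k1))%N = k2 by rewrite subnKC // ltnW.
have eig_ker (x : 'rV_N) :
    (x <= eigenspace (T^T *m T) 1)%MS <-> (x <= kermx (avg_laplacian L t k1 k2))%MS.
  rewrite sub_kermx; apply: (iff_trans (transition_gram_eigenspace1 L_contr _ _ x)).
  by rewrite k2E -avg_laplacian_ker; split=> [->|/eqP].
by apply/eqP; rewrite eqn_leq !mxrankS //; apply/rV_subP => x /eig_ker.
Qed.

End Averaging.

Lemma eigs_noninc_dvd_char (R : realType) N (S : 'M[R]_N) (mu : seq R) (m : nat) :
  eigs_noninc S mu -> (forall a, eigenvalue S a -> a <= 1) -> (m < N)%N ->
  1 <= mu`_m -> ('X - 1%:P) ^+ m.+1 %| char_poly S.
Proof.
move=> [size_mu [sorted_mu char_mu]] eig_le1 m_lt mu_m_ge1.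
have mu_le1 i : (i < N)%N -> mu`_i <= 1.
  move=> i_lt; apply: eig_le1; rewrite eigenvalue_root_char char_mu root_prod_XsubC.
  by rewrite mem_nth ?size_mu.
have mu1 i : (i <= m)%N -> mu`_i = 1.
  move=> i_le; have i_lt : (i < N)%N := leq_ltn_trans i_le m_lt.
  apply/le_anti; rewrite mu_le1 //= (le_trans mu_m_ge1) //.
  by apply: (sorted_leq_nth (rev_trans le_trans) lexx 0 sorted_mu); rewrite ?inE ?size_mu.
have take_mu : take m.+1 mu = nseq m.+1 1.
  apply: (@eq_from_nth _ 0); first by rewrite size_nseq size_takel // size_mu.
  move=> i; rewrite size_takel ?size_mu // => i_lt.
  by rewrite nth_take // nth_nseq i_lt mu1.
rewrite char_mu -(cat_take_drop m.+1 mu) big_cat /= take_mu big_nseq iter_mulr_1.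
exact: dvdp_mulIl.
Qed.

Lemma char_poly_similar (F : fieldType) N (P A : 'M[F]_N) : P \in unitmx ->
  char_poly (invmx P *m A *m P) = char_poly A.
Proof.
move=> P_unit; rewrite /char_poly /char_poly_mx !map_mxM.
set Q := map_mx polyC (invmx P); set P' := map_mx polyC P.
have QP : Q *m P' = 1%:M by rewrite -map_mxM mulVmx // map_mx1.
have PQ : P' *m Q = 1%:M by rewrite -map_mxM mulmxV // map_mx1.
have -> : 'X%:M - Q *m map_mx polyC A *m P' = Q *m ('X%:M - map_mx polyC A) *m P'.
  by rewrite mulmxBr mulmxBl scalar_mxC -[_%:M *m Q *m P']mulmxA QP mulmx1.
by rewrite !det_mulmx mulrC mulrA -det_mulmx PQ det1 mul1r.
Qed.

Lemma char_poly_block_scalar (F : fieldType) m r (a : F) (C : 'M[F]_r) :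
  char_poly (block_mx (a%:M : 'M[F]_m) 0 0 C) = ('X - a%:P) ^+ m * char_poly C.
Proof.
rewrite /char_poly /char_poly_mx map_block_mx map_scalar_mx !map_mx0.
rewrite [X in X - _](scalar_mx_block m r) opp_block_mx add_block_mx.
by rewrite !oppr0 !addr0 det_ublock -(@raddfB _ _ (@scalar_mx {poly F} m)) det_scalar.
Qed.

Lemma symmetric_eigenspace_mult (R : realFieldType) N (S : 'M[R]_N) (a : R) :
  S^T = S -> ~~ (('X - a%:P) ^+ (\rank (eigenspace S a)).+1 %| char_poly S).
Proof.
(* In a basis made of a basis of the eigenspace K followed by one of its
   orthogonal complement, which S preserves, S = diag(a, C) with a not an
   eigenvalue of C. *)
move=> S_sym; set K := eigenspace S a.
have [m rK] : {m | \rank K = m} by exists (\rank K).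
have [r eN] : {r | (m + r)%N = N} by exists (N - m)%N; rewrite -rK subnKC ?rank_leq_col.
rewrite rK; subst N; apply/negP => dvd_char.
pose B1 : 'M[R]_(m, m + r) := castmx (rK, erefl) (row_base K).
have B1K : (B1 :=: K)%MS by apply: eqmx_trans (eqmx_cast _ _) (eq_row_base K).
have B1_free : row_free B1 by rewrite row_free_castmx row_base_free.
have rk_ker : \rank (kermx B1^T) = r by rewrite mxrank_ker mxrank_tr (eqP B1_free) addKn.
pose B2 : 'M[R]_(r, m + r) := castmx (rk_ker, erefl) (row_base (kermx B1^T)).
have B2_ker : (B2 :=: kermx B1^T)%MS.
  exact: eqmx_trans (eqmx_cast _ _) (eq_row_base _).
have B2_free : row_free B2 by rewrite row_free_castmx row_base_free.
have B2_orth p (x : 'M[R]_(p, m + r)) : (x <= B2)%MS -> x *m B1^T = 0.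
  by rewrite B2_ker sub_kermx => /eqP.
have B12_disj (x : 'rV_(m + r)) : (x <= B1)%MS -> (x <= B2)%MS -> x = 0.
  move=> /submxP[z ->] /B2_orth xB1; apply/eqP; rewrite -sqnorm_eq0.
  by rewrite /sqnorm trmx_mul mulmxA xB1 mul0mx mxE.
pose P := col_mx B1 B2.
have P_unit : P \in unitmx.
  rewrite -row_full_unit /row_full -addsmxE mxrank_disjoint_sum.
    by rewrite (eqP B1_free) (eqP B2_free).
  apply/eqP; rewrite -submx0; apply/rV_subP => x; rewrite sub_capmx.
  by case/andP => x1 x2; rewrite (B12_disj _ x1 x2) sub0mx.
have B1S : B1 *m S = a *: B1 by apply/eigenspaceP; rewrite B1K.
have B2S : (B2 *m S <= B2)%MS.
  rewrite B2_ker sub_kermx -mulmxA -{1}S_sym -trmx_mul B1S linearZ /= -scalemxAr.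
  by rewrite B2_orth ?scaler0.
pose C := B2 *m S *m pinvmx B2.
have CB2 : C *m B2 = B2 *m S by rewrite mulmxKpV.
have SE : S = invmx P *m block_mx a%:M 0 0 C *m P.
  rewrite -mulmxA mul_block_col !mul0mx addr0 add0r mul_scalar_mx CB2 -B1S.
  by rewrite -mul_col_mx mulKmx.
move: dvd_char; rewrite SE char_poly_similar // char_poly_block_scalar exprSr.
rewrite dvdp_mul2l ?expf_neq0 ?polyXsubC_eq0 //.
rewrite dvdp_XsubCl -eigenvalue_root_char => /eigenvalueP[v vC v_neq0].
have wS : v *m B2 *m S = a *: (v *m B2) by rewrite -mulmxA -CB2 mulmxA vC scalemxAl.
have w0 : v *m B2 = 0.
  by apply: B12_disj; [rewrite B1K; apply/eigenspaceP | apply: submxMl].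
by move: v_neq0; rewrite -(mulmx_free_eq0 _ B2_free) w0 eqxx.
Qed.

Theorem lemma10 (R : realType) (n d : nat) (sgn : 'I_n -> 'I_n -> bool)
  (W : nat -> 'I_n -> 'I_n -> 'M[R]_d) (t : nat -> R) (alpha : R)
  (k1 k2 m : nat) (mu : seq R) :
  (1 < n)%N ->
  (forall k, weight_ok sgn (W k)) ->
  t 0%N = 0 -> 0 < alpha -> (forall k, alpha <= t k.+1 - t k) ->
  (forall M : R, exists K : nat, forall k, (K <= k)%N -> M <= t k) ->
  (k1 < k2)%N ->
  m = \rank (kermx (avg_laplacian (fun k => laplacian sgn (W k)) t k1 k2)) ->
  (m < dn n d)%N ->
  eigs_noninc ((Phi (fun k => laplacian sgn (W k)) (fun k => t k.+1 - t k) k1 k2)^T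
               *m Phi (fun k => laplacian sgn (W k)) (fun k => t k.+1 - t k) k1 k2) mu ->
  mu`_m < 1.
Proof.
(* Of Assumption 1 only alpha > 0 matters: it makes every dt_k positive. *)
move=> _ W_ok _ alpha_gt0 dt_ge _ k12 m_def m_lt eigs_mu.
set L := fun k => laplacian sgn (W k) in m_def eigs_mu.
have t_incr k : t k < t k.+1 by rewrite -subr_gt0 (lt_le_trans alpha_gt0).
have L_psd k : psd (L k) := laplacian_psd (W_ok k).
set T := Phi L _ k1 k2 in eigs_mu.
have S_sym : (T^T *m T)^T = T^T *m T by rewrite trmx_mul trmxK.
rewrite ltNge; apply/negP => mu_m_ge1.
have : ('X - 1%:P) ^+ m.+1 %| char_poly (T^T *m T).
  apply: (eigs_noninc_dvd_char eigs_mu) => // a.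
  exact: (Phi_gram_eigenvalue_le1 L_psd t_incr).
rewrite m_def -(Phi_gram_eigenspace1_rank L_psd t_incr k12).
by rewrite (negbTE (symmetric_eigenspace_mult 1 S_sym)).
Qed.
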